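(* Let $T\subset\mathbb{R}^2$ be an isosceles triangle with apex $A$, height $h$ (Euclidean distance from $A$ to the base), and let $x_0$ be the point on the axis of symmetry of $T$ at Euclidean distance $h_2$ from $A$, where $0<h_2<h$. Then $$\pi_{T,x_0}=\frac12\left(\frac{4h}{h_2}+\frac{h}{h-h_2}\right).$$ Consequently $\pi_{T,x_0}\to\infty$ as $h_2\to0^+$ or $h_2\to h^-$, $\pi_{T,x_0}$ is strictly decreasing for $0<h_2<2h/3$ and strictly increasing for $2h/3<h_2<h$, and its minimum value is $\pi_{T,x_0}=9/2$, attained exactly at $h_2=2h/3$ (the centroid), independently of the side lengths of $T$.
   Context: For a convex set $B\subset\mathbb{R}^2$ and an interior point $x_0$, $\|x\|_{B,x_0}:=\inf\{\xi>0 : x\in \xi(B-x_0)\}$. For a convex polygon $B$ with vertices $p_0,\dots,p_n=p_0$ in counterclockwise order, $\pi_{B,x_0}:=\frac12\sum_{i=1}^n\|p_i-p_{i-1}\|_{B,x_0}$ (half of the perimeter of $B$ measured by its own offset functional; when $B$ is symmetric about a line through $x_0$ this equals the clockwise value). *)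

From mathcomp Require Import all_boot all_order all_algebra.
From mathcomp Require Import all_classical all_reals all_analysis.
Set Implicit Arguments. Unset Strict Implicit. Unset Printing Implicit Defensive.
Import Order.TTheory GRing.Theory Num.Theory.
Local Open Scope classical_set_scope.
Local Open Scope ring_scope.

Section Defs.
Variable R : realType.
Notation pt := (R * R)%type.

Definition psub (x y : pt) : pt := (x.1 - y.1, x.2 - y.2).
Definition pscale (k : R) (x : pt) : pt := (k * x.1, k * x.2).
Definition padd (x y : pt) : pt := (x.1 + y.1, x.2 + y.2).

Definition enorm (x : pt) : R := Num.sqrt (x.1 ^+ 2 + x.2 ^+ 2).
Definition eucl_dist (x y : pt) : R := enorm (psub x y).

Definition cross (u v : pt) : R := u.1 * v.2 - u.2 * v.1.

Definition gauge (B : set pt) (x0 x : pt) : R :=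
  inf [set xi : R | 0 < xi /\ exists b, B b /\ x = pscale xi (psub b x0)].

Definition polygon_pi (B : set pt) (x0 : pt) (ps : seq pt) : R :=
  2^-1 * \sum_(i < size ps)
     gauge B x0 (psub (nth (0, 0) ps ((i.+1) %% size ps)) (nth (0, 0) ps i)).

Definition triangle (A P Q : pt) : set pt :=
  [set p | exists a b c : R, [/\ 0 <= a, 0 <= b, 0 <= c, a + b + c = 1 &
     p = padd (pscale a A) (padd (pscale b P) (pscale c Q))]].

Definition ccw (A P Q : pt) : Prop := 0 < cross (psub P A) (psub Q A).

Definition dist_to_line (A P Q : pt) : R :=
  `|cross (psub Q P) (psub A P)| / eucl_dist Q P.

Definition midpoint (P Q : pt) : pt := pscale 2^-1 (padd P Q).

Definition axis_point (A P Q : pt) (t : R) : pt :=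
  padd A (pscale (t / eucl_dist (midpoint P Q) A) (psub (midpoint P Q) A)).

End Defs.

(* With M the midpoint of the base PQ, the isosceles hypothesis gives |M - A| = h, so
   x0 = A + t (M - A) with t = h2 / h, i.e. x0 has barycentric coordinates
   (1 - t, t/2, t/2).  A vector v = al (P - A) + ga (Q - A) lies in xi (T - x0) iff
   x0 + v / xi has nonnegative barycentric coordinates, so the gauge of v is the
   reciprocal of the largest admissible step 1 / xi.  This gives 1 / (1 - t) for the
   side PA and 2 / t for QP and AQ, hence
   pi = (4 / t + 1 / (1 - t)) / 2 = (4 h / h2 + h / (h - h2)) / 2, and the rest is
   one-variable analysis, based on pi - 9/2 = (2 h - 3 h2)^2 / (2 h2 (h - h2)). *)

From mathcomp Require Import all_boot all_order all_algebra.
From mathcomp Require Import all_classical all_reals all_analysis.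
From mathcomp Require Import ring lra.
Set Implicit Arguments. Unset Strict Implicit. Unset Printing Implicit Defensive.
Import Order.TTheory GRing.Theory Num.Theory.
Local Open Scope classical_set_scope.
Local Open Scope ring_scope.

Lemma inf_pos_halfline (R : realType) (S : set R) (k : R) : 0 < k ->
  (forall xi, 0 < xi -> S xi <-> k <= xi) -> inf [set xi | 0 < xi /\ S xi] = k.
Proof.
move=> k0 Sk; rewrite (_ : [set xi | _] = [set` `[k, +oo[]) ?inf_itv ?bnd_simp //.
apply/seteqP; split => xi /=; rewrite in_itv /= andbT.
  by move=> [xi0 /(Sk _ xi0)].
by move=> kxi; have xi0 := lt_le_trans k0 kxi; split => //; apply/Sk.
Qed.

Lemma cross_lin_indep (R : realType) (u w : R * R) (p q : R) : cross u w != 0 ->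
  padd (pscale p u) (pscale q w) = (0, 0) -> p = 0 /\ q = 0.
Proof.
case: u w => [u1 u2] [w1 w2]; rewrite /cross /padd /pscale /= => D [e1 e2].
have Ep : p * (u1 * w2 - u2 * w1) = w2 * (p * u1 + q * w1) - w1 * (p * u2 + q * w2).
  by ring.
have Eq : q * (u1 * w2 - u2 * w1) = u1 * (p * u2 + q * w2) - u2 * (p * u1 + q * w1).
  by ring.
rewrite e1 e2 !mulr0 subr0 in Ep Eq.
by move/eqP: Ep; move/eqP: Eq; rewrite !mulf_eq0 (negbTE D) !orbF => /eqP -> /eqP.
Qed.

Section ScaledTriangle.
Variable R : realType.
Variables (A P Q : R * R) (t : R).
Hypothesis APQ_nondeg : cross (psub P A) (psub Q A) != 0.
Let x0 := padd A (pscale t (psub (midpoint P Q) A)).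

(* The three quantities are the barycentric coordinates of [x0 + v / xi]. *)
Lemma mem_scaled_triangle (v : R * R) (al ga xi : R) :
  v = padd (pscale al (psub P A)) (pscale ga (psub Q A)) -> 0 < xi ->
  (exists b, triangle A P Q b /\ v = pscale xi (psub b x0)) <->
  [/\ 0 <= t / 2 + al / xi, 0 <= t / 2 + ga / xi & 0 <= 1 - t - (al + ga) / xi].
Proof.
move=> -> xi0; have xi_neq0 : xi != 0 by rewrite gt_eqF.
split.
  move=> [_ [[a [b [c [a0 b0 c0 abc ->]]]] Ev]].
  have [] := cross_lin_indep (p := xi * (b - t / 2) - al) (q := xi * (c - t / 2) - ga)
    APQ_nondeg.
    move: Ev; rewrite /x0 /padd /pscale /psub /midpoint /=.
    case: A P Q => [a1 a2] [p1 p2] [q1 q2] /= [e1 e2].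
    have ea : a = 1 - b - c by lra.
    subst a; congr pair.
      by move/eqP: e1; rewrite eq_sym -subr_eq0 => /eqP <-; field.
    by move/eqP: e2; rewrite eq_sym -subr_eq0 => /eqP <-; field.
  move=> /eqP; rewrite subr_eq0 => /eqP eb /eqP; rewrite subr_eq0 => /eqP ec.
  have Eb : t / 2 + al / xi = b by rewrite -eb; field.
  have Ec : t / 2 + ga / xi = c by rewrite -ec; field.
  have -> : 1 - t - (al + ga) / xi = 1 - (t / 2 + al / xi) - (t / 2 + ga / xi) by field.
  by rewrite Eb Ec; split => //; lra.
move=> [b0 c0 a0].
exists (padd (pscale (1 - t - (al + ga) / xi) A)
          (padd (pscale (t / 2 + al / xi) P) (pscale (t / 2 + ga / xi) Q))).
split.
  exists (1 - t - (al + ga) / xi), (t / 2 + al / xi), (t / 2 + ga / xi).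
  by split => //; field.
by rewrite /x0 /padd /pscale /psub /midpoint /=; congr pair; field.
Qed.

Lemma gauge_triangle (v : R * R) (al ga m : R) :
  v = padd (pscale al (psub P A)) (pscale ga (psub Q A)) -> 0 < m ->
  (forall y : R, 0 < y ->
     [/\ 0 <= t / 2 + al * y, 0 <= t / 2 + ga * y & 0 <= 1 - t - (al + ga) * y]
     <-> y <= m) ->
  gauge (triangle A P Q) x0 v = m^-1.
Proof.
move=> Ev m0 Hm; apply: inf_pos_halfline; first by rewrite invr_gt0.
move=> xi xi0; rewrite (mem_scaled_triangle Ev xi0) invf_ple ?posrE //.
by apply: Hm; rewrite invr_gt0.
Qed.

Lemma gauge_triangle_PA : 0 < t -> t < 1 ->
  gauge (triangle A P Q) x0 (psub P A) = (1 - t)^-1.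
Proof.
move=> t_gt0 t_lt1; apply: (@gauge_triangle _ 1 0); rewrite ?subr_gt0 //.
  by rewrite /padd /pscale /psub /=; congr pair; ring.
by move=> y y0; split; [case; lra | move=> ?; split; lra].
Qed.

Lemma gauge_triangle_QP : 0 < t -> t < 1 ->
  gauge (triangle A P Q) x0 (psub Q P) = 2 / t.
Proof.
move=> t_gt0 t_lt1; rewrite -invf_div; apply: (@gauge_triangle _ (-1) 1).
- by rewrite /padd /pscale /psub /=; congr pair; ring.
- by rewrite divr_gt0.
by move=> y y0; split; [case; lra | move=> ?; split; lra].
Qed.

Lemma gauge_triangle_AQ : 0 < t -> t < 1 ->
  gauge (triangle A P Q) x0 (psub A Q) = 2 / t.
Proof.
move=> t_gt0 t_lt1; rewrite -invf_div; apply: (@gauge_triangle _ 0 (-1)).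
- by rewrite /padd /pscale /psub /=; congr pair; ring.
- by rewrite divr_gt0.
by move=> y y0; split; [case; lra | move=> ?; split; lra].
Qed.

End ScaledTriangle.

Lemma enorm_sqr (R : realType) (x : R * R) : enorm x ^+ 2 = x.1 ^+ 2 + x.2 ^+ 2.
Proof. by rewrite sqr_sqrtr // addr_ge0 ?sqr_ge0. Qed.

Lemma ccw_eucl_dist_gt0 (R : realType) (A P Q : R * R) :
  ccw A P Q -> 0 < eucl_dist Q P.
Proof.
case: A P Q => [a1 a2] [p1 p2] [q1 q2].
rewrite /ccw /eucl_dist /enorm /cross /psub /= => D0.
rewrite sqrtr_gt0 lt_def addr_ge0 ?sqr_ge0 // andbT.
apply: contraTN D0; rewrite paddr_eq0 ?sqr_ge0 // !sqrf_eq0 !subr_eq0.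
move=> /andP[/eqP-> /eqP->].
by rewrite lt_def (_ : _ * _ - _ = 0) ?eqxx //; ring.
Qed.

Lemma dist_to_line_gt0 (R : realType) (A P Q : R * R) :
  ccw A P Q -> 0 < dist_to_line A P Q.
Proof.
move=> APQ; apply: divr_gt0; last exact: ccw_eucl_dist_gt0 APQ.
rewrite normr_gt0 (_ : cross _ _ = cross (psub P A) (psub Q A)) ?gt_eqF //.
by rewrite /cross /psub /=; ring.
Qed.

Lemma eucl_dist_midpoint_apex (R : realType) (A P Q : R * R) :
  eucl_dist A P = eucl_dist A Q -> 0 < eucl_dist Q P ->
  eucl_dist (midpoint P Q) A = dist_to_line A P Q.
Proof.
rewrite /dist_to_line /eucl_dist => /(congr1 (fun r => r ^+ 2)) iso PQ_gt0.
apply/eqP; rewrite -(@eqrXn2 _ 2) ?divr_ge0 ?sqrtr_ge0 //.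
rewrite expr_div_n real_normK ?num_real // !enorm_sqr.
move: iso PQ_gt0; rewrite /enorm !enorm_sqr.
case: A P Q => [a1 a2] [p1 p2] [q1 q2]; rewrite /cross /midpoint /psub /pscale /padd /=.
rewrite sqrtr_gt0 => iso PQ_gt0; apply/eqP.
apply: (mulIf (lt0r_neq0 PQ_gt0)); rewrite divfK ?lt0r_neq0 //.
apply/eqP; rewrite -subr_eq0.
(* Lagrange: |M - A|^2 |Q - P|^2 = cross^2 + ((|A - P|^2 - |A - Q|^2) / 2)^2,
   M the midpoint of PQ *)
rewrite (_ : _ - _ = ((a1 - p1) ^+ 2 + (a2 - p2) ^+ 2
                      - ((a1 - q1) ^+ 2 + (a2 - q2) ^+ 2)) ^+ 2 / 4); last by field.
by rewrite iso subrr expr0n mul0r.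
Qed.

Lemma polygon_pi_triangle (R : realType) (B : set (R * R)) (x0 A P Q : R * R) :
  polygon_pi B x0 [:: A; P; Q] =
  2^-1 * (gauge B x0 (psub P A) + gauge B x0 (psub Q P) + gauge B x0 (psub A Q)).
Proof. by rewrite /polygon_pi /= !big_ord_recr big_ord0 /= add0r. Qed.

Definition isosceles_pi (R : realType) (h x : R) : R :=
  2^-1 * (4 * h / x + h / (h - x)).

Lemma polygon_pi_isosceles (R : realType) (A P Q : R * R) (h2 : R) :
  ccw A P Q -> eucl_dist A P = eucl_dist A Q -> 0 < h2 < dist_to_line A P Q ->
  polygon_pi (triangle A P Q) (axis_point A P Q h2) [:: A; P; Q] =
  isosceles_pi (dist_to_line A P Q) h2.
Proof.
move=> APQ iso /andP[h2_gt0 h2_lth].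
have APQ_nondeg : cross (psub P A) (psub Q A) != 0 by exact: lt0r_neq0.
rewrite /axis_point eucl_dist_midpoint_apex ?(ccw_eucl_dist_gt0 APQ) //.
have h_gt0 := dist_to_line_gt0 APQ; set h := dist_to_line A P Q in h_gt0 h2_lth *.
have t_gt0 : 0 < h2 / h by rewrite divr_gt0.
have t_lt1 : h2 / h < 1 by rewrite ltr_pdivrMr // mul1r.
rewrite polygon_pi_triangle gauge_triangle_PA ?gauge_triangle_QP ?gauge_triangle_AQ //.
by rewrite /isosceles_pi; field; rewrite !lt0r_neq0 ?subr_gt0.
Qed.

Lemma isosceles_piB (R : realType) (h a b : R) : 0 < a < h -> 0 < b < h ->
  isosceles_pi h a - isosceles_pi h b =
  (b - a) * (4 * (h - a) * (h - b) - a * b) * (h / (2 * a * b * (h - a) * (h - b))).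
Proof.
move=> /andP[a_gt0 a_lth] /andP[b_gt0 b_lth].
by rewrite /isosceles_pi; field; rewrite !lt0r_neq0 ?subr_gt0.
Qed.

Lemma isosceles_pi_weight_gt0 (R : realType) (h a b : R) : 0 < a < h -> 0 < b < h ->
  0 < h / (2 * a * b * (h - a) * (h - b)).
Proof.
move=> /andP[a_gt0 a_lth] /andP[b_gt0 b_lth].
by rewrite divr_gt0 ?(lt_trans a_gt0 a_lth) // !mulr_gt0 ?subr_gt0.
Qed.

Lemma isosceles_pi_decreasing (R : realType) (h a b : R) :
  0 < a -> a < b -> b < 2 * h / 3 -> isosceles_pi h b < isosceles_pi h a.
Proof.
move=> a_gt0 ab bh.
have aI : 0 < a < h by apply/andP; split; lra.
have bI : 0 < b < h by apply/andP; split; lra.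
have a_lt : a < 2 * (h - a) by lra.
have b_lt : b < 2 * (h - b) by lra.
have ab_lt := ltr_pM (ltW a_gt0) (ltW (lt_trans a_gt0 ab)) a_lt b_lt.
rewrite -subr_gt0 isosceles_piB // mulr_gt0 ?isosceles_pi_weight_gt0 //.
by rewrite mulr_gt0 ?subr_gt0 //; lra.
Qed.

Lemma isosceles_pi_increasing (R : realType) (h a b : R) :
  2 * h / 3 < a -> a < b -> b < h -> isosceles_pi h a < isosceles_pi h b.
Proof.
move=> ha ab bh.
have aI : 0 < a < h by apply/andP; split; lra.
have bI : 0 < b < h by apply/andP; split; lra.
have a_gt : 2 * (h - a) < a by lra.
have b_gt : 2 * (h - b) < b by lra.
have ab_gt : 2 * (h - a) * (2 * (h - b)) < a * b.
  by apply: ltr_pM a_gt b_gt; apply: ltW; lra.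
rewrite -subr_gt0 -opprB oppr_gt0 isosceles_piB //.
rewrite pmulr_llt0 ?isosceles_pi_weight_gt0 // pmulr_rlt0 ?subr_gt0 //.
by rewrite subr_lt0; lra.
Qed.

Lemma isosceles_pi_sub_min (R : realType) (h x : R) : 0 < x < h ->
  isosceles_pi h x - 9 / 2 = (2 * h - 3 * x) ^+ 2 / (2 * x * (h - x)).
Proof.
move=> /andP[x_gt0 x_lth].
by rewrite /isosceles_pi; field; rewrite !lt0r_neq0 ?subr_gt0.
Qed.

Lemma isosceles_pi_ge_min (R : realType) (h x : R) :
  0 < x < h -> 9 / 2 <= isosceles_pi h x.
Proof.
move=> xh; rewrite -subr_ge0 isosceles_pi_sub_min //.
case/andP: xh => x_gt0 x_lth.
by rewrite divr_ge0 ?sqr_ge0 // ltW // !mulr_gt0 ?subr_gt0.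
Qed.

Lemma isosceles_pi_eq_min (R : realType) (h x : R) :
  0 < x < h -> isosceles_pi h x = 9 / 2 -> x = 2 * h / 3.
Proof.
move=> xh /eqP; rewrite -subr_eq0 isosceles_pi_sub_min //.
case/andP: xh => x_gt0 x_lth.
rewrite mulf_eq0 invr_eq0 !mulf_eq0 orbb pnatr_eq0 (gt_eqF x_gt0).
rewrite !subr_eq0 (gt_eqF x_lth) /= !orbF.
by move=> /eqP ->; field.
Qed.

Lemma isosceles_pi_centroid (R : realType) (h : R) :
  0 < h -> isosceles_pi h (2 * h / 3) = 9 / 2.
Proof.
move=> h_gt0; rewrite /isosceles_pi (_ : h - 2 * h / 3 = h / 3); last by field.
by field; rewrite gt_eqF.
Qed.

Lemma isosceles_pi_ge_apex (R : realType) (h x : R) : 0 < x < h ->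
  2 * h / x <= isosceles_pi h x.
Proof.
move=> /andP[x_gt0 x_lth]; rewrite -subr_ge0.
rewrite (_ : _ - _ = h / (2 * (h - x))); last first.
  by rewrite /isosceles_pi; field; rewrite !lt0r_neq0 ?subr_gt0.
by rewrite divr_ge0 ?mulr_ge0 ?subr_ge0 ?ltW // (lt_trans x_gt0 x_lth).
Qed.

Lemma isosceles_pi_ge_base (R : realType) (h x : R) : 0 < x < h ->
  h / (2 * (h - x)) <= isosceles_pi h x.
Proof.
move=> /andP[x_gt0 x_lth]; rewrite -subr_ge0.
rewrite (_ : _ - _ = 2 * h / x); last first.
  by rewrite /isosceles_pi; field; rewrite !lt0r_neq0 ?subr_gt0.
by rewrite divr_ge0 ?mulr_ge0 ?ltW // (lt_trans x_gt0 x_lth).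
Qed.

Lemma isosceles_pi_cvgy_apex (R : realType) (h : R) : 0 < h ->
  isosceles_pi h x @[x --> 0^'+] --> +oo.
Proof.
move=> h_gt0; apply/cvgryPge => M.
have M1_gt0 : 0 < `|M| + 1 by rewrite ltr_pwDr.
near=> x.
have x_gt0 : 0 < x by near: x; exact: nbhs_right_gt.
have x_lth : x < h by near: x; exact: nbhs_right_lt.
have x_small : x < 2 * h / (`|M| + 1).
  by near: x; apply: nbhs_right_lt; rewrite divr_gt0 ?mulr_gt0.
apply: le_trans (isosceles_pi_ge_apex _); last by rewrite x_gt0.
have : `|M| + 1 < 2 * h / x by rewrite ltr_pdivlMr // mulrC -ltr_pdivlMr.
by have := ler_norm M; lra.
Unshelve. all: end_near.
Qed.

Lemma isosceles_pi_cvgy_base (R : realType) (h : R) : 0 < h ->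
  isosceles_pi h x @[x --> h^'-] --> +oo.
Proof.
move=> h_gt0; apply/cvgryPge => M.
have M1_gt0 : 0 < `|M| + 1 by rewrite ltr_pwDr.
have e_gt0 : 0 < h / (`|M| + 1) by rewrite divr_gt0.
near=> x.
have x_gt0 : 0 < x by near: x; exact: nbhs_left_gt.
have x_lth : x < h by near: x; exact: nbhs_left_lt.
have x_close : h - h / (`|M| + 1) / 2 < x by near: x; apply: nbhs_left_gt; lra.
apply: le_trans (isosceles_pi_ge_base _); last by rewrite x_gt0.
have : `|M| + 1 < h / (2 * (h - x)).
  by rewrite ltr_pdivlMr ?mulr_gt0 ?subr_gt0 // mulrC -ltr_pdivlMr //; lra.
by have := ler_norm M; lra.
Unshelve. all: end_near.
Qed.

Theorem mainTheorem9 (R : realType) (A P Q : R * R) :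
  ccw A P Q -> eucl_dist A P = eucl_dist A Q ->
  let T := triangle A P Q in
  let h := dist_to_line A P Q in
  let f := fun h2 : R => polygon_pi T (axis_point A P Q h2) [:: A; P; Q] in
  (forall h2, 0 < h2 < h -> f h2 = 2^-1 * (4 * h / h2 + h / (h - h2))) /\
  [/\ f x @[x --> 0^'+] --> +oo,
      f x @[x --> h^'-] --> +oo,
      (forall a b, 0 < a -> a < b -> b < 2 * h / 3 -> f b < f a),
      (forall a b, 2 * h / 3 < a -> a < b -> b < h -> f a < f b) &
      f (2 * h / 3) = 9 / 2 /\
      (forall h2, 0 < h2 < h -> 9 / 2 <= f h2 /\ (f h2 = 9 / 2 -> h2 = 2 * h / 3))].
Proof.
move=> APQ iso T h f.
have h_gt0 : 0 < h := dist_to_line_gt0 APQ.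
have f_eq h2 : 0 < h2 < h -> f h2 = isosceles_pi h h2 := polygon_pi_isosceles APQ iso.
have in_0h x : 0 < x -> x < h -> 0 < x < h by move=> *; apply/andP.
split; first exact: f_eq.
split.
- apply: ger_cvgy (isosceles_pi_cvgy_apex h_gt0).
  by near=> x; rewrite f_eq ?in_0h.
- apply: ger_cvgy (isosceles_pi_cvgy_base h_gt0).
  by near=> x; rewrite f_eq ?in_0h.
- by move=> a b a_gt0 ab bh; rewrite !f_eq ?in_0h ?isosceles_pi_decreasing //; lra.
- by move=> a b ha ab bh; rewrite !f_eq ?in_0h ?isosceles_pi_increasing //; lra.
- split; first by rewrite f_eq ?in_0h ?isosceles_pi_centroid //; lra.
  move=> h2 h2I; rewrite f_eq //.
  by split; [exact: isosceles_pi_ge_min | exact: isosceles_pi_eq_min].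
Unshelve. all: end_near.
Qed.
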